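(* Let $n,m\ge1$. If $\varphi\colon A\to B$ is a Frobenius $n$-homomorphism and $\gamma\colon A\to B$ is a Frobenius $m$-homomorphism, then $\varphi+\gamma$ is a Frobenius $(n+m)$-homomorphism; moreover $R_{\varphi+\gamma}(a,z)=R_\varphi(a,z)R_\gamma(a,z)$ for all $a\in A$.
   Context: $\mathbb{K}=\mathbb{R}$ or $\mathbb{C}$; $A$ and $B$ are commutative associative unital $\mathbb{K}$-algebras. For a $\mathbb{K}$-linear map $\varphi\colon A\to B$ and $a\in A$, the characteristic function is $R_\varphi(a,z)=\exp\bigl(\varphi(\ln(1+az))\bigr)\in B[[z]]$, with $\ln(1+az)=\sum_{k\ge1}(-1)^{k+1}a^kz^k/k$ and $\varphi$ applied coefficientwise. The Frobenius maps $\Phi_k\colon A^k\to B$ of $\varphi$ are defined by $\Phi_1=\varphi$ and $\Phi_{k+1}(a_1,\dots,a_{k+1})=\varphi(a_1)\Phi_k(a_2,\dots,a_{k+1})-\sum_{j=2}^{k+1}\Phi_k(a_2,\dots,a_{j-1},a_1a_j,a_{j+1},\dots,a_{k+1})$. A linear map $\varphi$ is a (Frobenius) $n$-homomorphism if $\varphi(1)=n\cdot1_B$ and $\Phi_k\equiv0$ for all $k\ge n+1$. *)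

From HB Require Import structures.
From mathcomp Require Import all_boot all_order all_algebra.
Set Implicit Arguments. Unset Strict Implicit. Unset Printing Implicit Defensive.
Import Order.TTheory GRing.Theory Num.Theory.
Local Open Scope ring_scope.

Section Frobenius.
Variables (K : numFieldType) (A B : comAlgType K).

(* Frobenius maps: frob phi k s is Phi_{k+1}(s) when size s = k+1.
   Phi_1 = phi;  Phi_{k+1}(a1, a2..a_{k+1}) = phi a1 * Phi_k(a2..)
     - sum_{j} Phi_k(a2.., a1*a_j, ..). *)
Fixpoint frob (phi : A -> B) (k : nat) (s : seq A) : B :=
  match k, s with
  | 0, a :: _ => phi a
  | k'.+1, a1 :: s' =>
      phi a1 * frob phi k' s'
      - \sum_(j < size s') frob phi k' (set_nth 0 s' j (a1 * nth 0 s' j))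
  | _, _ => 0
  end.

Definition FrobMap (phi : A -> B) (k : nat) (t : k.-tuple A) : B :=
  frob phi k.-1 t.

Definition is_nhom (n : nat) (phi : A -> B) : Prop :=
  linear phi /\ phi 1 = n%:R /\
  (forall (k : nat) (t : k.-tuple A), (n.+1 <= k)%N -> FrobMap phi t = 0).

Definition ps (R : Type) := nat -> R.

Definition ps_one (R : pzRingType) : ps R := fun n => if n == 0%N then 1 else 0.
Definition ps_mul (R : pzRingType) (f g : ps R) : ps R :=
  fun n => \sum_(i < n.+1) f i * g (n - i)%N.
Definition ps_pow (R : pzRingType) (f : ps R) (m : nat) : ps R :=
  iter m (ps_mul f) (ps_one R).

(* exp of a series with zero constant term: sum_m f^m / m! *)
Definition ps_exp (f : ps B) : ps B :=
  fun n => \sum_(m < n.+1) ((m`!)%:R : K)^-1 *: ps_pow f m n.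

(* ln(1 + a z) = sum_{k>=1} (-1)^(k+1) a^k z^k / k, in A[[z]] *)
Definition ln1p (a : A) : ps A :=
  fun k => if k == 0%N then 0
           else (((-1) ^+ k.+1 / k%:R : K) *: a ^+ k).

Definition charfun (phi : A -> B) (a : A) : ps B :=
  ps_exp (fun k => phi (ln1p a k)).

End Frobenius.

(* Extend the Frobenius maps by Phi_0 = 1.  The correction term of the defining
   recursion is a derivation in its first argument, so by the product rule
   Phi^(phi+gamma)(a_1, ..., a_k) is the sum, over all ways of splitting the
   arguments into two subsequences S and S', of Phi^phi(S) Phi^gamma(S').  For
   k > n + m every splitting has |S| > n or |S'| > m, so every summand vanishes.
   By linearity R_(phi+gamma)(a, z) = exp(F + G) with F = phi(ln(1 + az)) and
   G = gamma(ln(1 + az)) of zero constant term; exp(F + G) = exp F exp G is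
   checked coefficientwise on the polynomial truncations, where it is the
   binomial theorem. *)

From HB Require Import structures.
From mathcomp Require Import all_boot all_order all_algebra.
From Stdlib Require Import FunctionalExtensionality.
Set Implicit Arguments. Unset Strict Implicit. Unset Printing Implicit Defensive.
Import Order.TTheory GRing.Theory Num.Theory.
Local Open Scope ring_scope.

Section FrobeniusProduct.
Variables (A : pzRingType) (B : comPzRingType).
Implicit Types (f g psi : A -> B) (a : A) (s : seq A) (b : seq bool).

Definition dmul (F : seq A -> B) a s : B :=
  \sum_(j < size s) F (set_nth 0 s j (a * s`_j)).

(* [frobenius psi s] is Phi_k(s) for k = size s, extended by Phi_0 = 1 so that
   the defining recursion also holds for k = 1. *)
Fixpoint frobenius_rec psi k s : B :=
  match k, s with
  | 0, _ => 1
  | k'.+1, a :: s' => psi a * frobenius_rec psi k' s' - dmul (frobenius_rec psi k') a s'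
  | _, _ => 0
  end.

Definition frobenius psi s := frobenius_rec psi (size s) s.

Lemma size_set_nth_ord s (j : 'I_(size s)) x : size (set_nth 0 s j x) = size s.
Proof. by rewrite size_set_nth; apply/maxn_idPr. Qed.

Lemma frobenius_cons psi a s :
  frobenius psi (a :: s) = psi a * frobenius psi s - dmul (frobenius psi) a s.
Proof.
rewrite /frobenius /= /dmul; congr (_ - _).
by apply: eq_bigr => j _; rewrite size_set_nth_ord.
Qed.

Lemma mask_set_nth_false b s j x :
  size b = size s -> ~~ nth false b j -> mask b (set_nth 0 s j x) = mask b s.
Proof.
elim: s b j => [|y s IH] [|c b] j //= [Hb].
case: j => [|j] /=; first by case: c.
by move=> Hn; rewrite IH.
Qed.

Lemma dmul_mask (F : seq A -> B) a s b : size b = size s ->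
  \sum_(j < size s | nth false b j) F (mask b (set_nth 0 s j (a * s`_j)))
  = dmul F a (mask b s).
Proof.
rewrite /dmul; elim: s b F => [|x s IH] [|c b] F //=.
  by rewrite !big_ord0.
move=> [Hb].
rewrite big_mkcond big_ord_recl -big_mkcond /=.
case: c => /=; last by rewrite add0r; exact: IH.
by rewrite big_ord_recl; congr (_ + _); exact: (IH b (fun t => F (x :: t))).
Qed.

(* The Leibniz rule for the derivation [dmul _ a]. *)
Lemma dmul_mul_mask (F G : seq A -> B) a s b : size b = size s ->
  \sum_(j < size s) F (mask b (set_nth 0 s j (a * s`_j)))
                  * G (mask (map negb b) (set_nth 0 s j (a * s`_j)))
  = dmul F a (mask b s) * G (mask (map negb b) s)
  + F (mask b s) * dmul G a (mask (map negb b) s).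
Proof.
move=> Hb; have Hnb : size (map negb b) = size s by rewrite size_map.
rewrite -dmul_mask // -dmul_mask // mulr_suml mulr_sumr.
rewrite [X in _ = X + _]big_mkcond [X in _ = _ + X]big_mkcond -big_split /=.
apply: eq_bigr => j _; have Hj : (j < size b)%N by rewrite Hb.
rewrite (nth_map false) //; case Hbj: (nth false b j) => /=.
  by rewrite (@mask_set_nth_false (map negb b)) ?(nth_map false) ?Hbj ?addr0.
by rewrite (@mask_set_nth_false b) ?Hbj ?add0r.
Qed.

Fixpoint masks k : seq (seq bool) :=
  if k is k'.+1 then [seq true :: b | b <- masks k'] ++ [seq false :: b | b <- masks k']
  else [:: [::]].

Lemma size_masks k b : b \in masks k -> size b = k.
Proof.
elim: k b => [|k IH] b /=; first by rewrite inE => /eqP ->.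
by rewrite mem_cat => /orP [] /mapP [c Hc ->] /=; rewrite IH.
Qed.

Lemma frobeniusD f g s :
  frobenius (f \+ g) s
  = \sum_(b <- masks (size s)) frobenius f (mask b s) * frobenius g (mask (map negb b) s).
Proof.
have [k Hk] : exists k, size s = k by eexists.
rewrite Hk; elim: k s Hk => [|k IH] [|a s] //=.
  by move=> _; rewrite big_seq1 mulr1.
move=> [Hs]; rewrite frobenius_cons {1}/dmul.
rewrite (eq_bigr _ (fun j _ => IH _ (etrans (size_set_nth_ord j _) Hs))).
rewrite exchange_big big_cat !big_map /= (IH s Hs) mulr_sumr -sumrB -big_split /=.
rewrite big_seq [RHS]big_seq; apply: eq_bigr => b /size_masks Hb.
rewrite dmul_mul_mask ?Hb // !frobenius_cons /=.
set X := frobenius f _; set Y := frobenius g _.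
by rewrite mulrBl mulrBr !mulrA (mulrC X (g a)) !mulrDl opprD addrACA.
Qed.

Lemma frobeniusD_eq0 n m f g s :
  (forall t, (n < size t)%N -> frobenius f t = 0) ->
  (forall t, (m < size t)%N -> frobenius g t = 0) ->
  (n + m < size s)%N -> frobenius (f \+ g) s = 0.
Proof.
move=> Hf Hg Hs; rewrite frobeniusD big_seq big1 // => b /size_masks Hb.
have Hcount : (count id b + count negb b)%N = size s by rewrite -Hb count_predC.
case: (ltnP n (count id b)) => Hn; first by rewrite Hf ?mul0r // size_mask.
rewrite Hg ?mulr0 // size_mask ?size_map ?count_map //.
by rewrite -(ltn_add2l (count id b)) Hcount (leq_ltn_trans _ Hs) ?leq_add2r.
Qed.

End FrobeniusProduct.

Lemma sum_antidiagonal (V : nmodType) N (F : nat -> nat -> V) :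
  \sum_(m < N.+1) \sum_(p < m.+1) F p (m - p)%N
  = \sum_(p < N.+1) \sum_(q < N.+1 | (p + q <= N)%N) F p q.
Proof.
transitivity (\sum_(p < N.+1) \sum_(m < N.+1 | (p <= m)%N) F p (m - p)%N).
  rewrite [RHS](exchange_big_dep xpredT) //=; apply: eq_bigr => m _.
  by rewrite (big_ord_widen_cond N.+1 xpredT (fun p => F p (m - p)%N)).
apply: eq_bigr => p _.
have Hp : (p <= N.+1)%N by exact: ltnW.
rewrite -(big_mkord (fun m => p <= m)%N (fun m => F p (m - p)%N)).
rewrite -(big_mkord (fun q => p + q <= N)%N (F p)).
rewrite (big_cat_nat (leq0n p) Hp) big_nat_cond big1; last first.
  by move=> m /andP [/andP [_ Hm]]; rewrite leqNgt Hm.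
rewrite -{1}(add0n p) big_addn (big_nat_widen _ _ N.+1) ?leq_subr //.
rewrite /= add0r; apply: eq_big => [q|q _]; last by rewrite addnK.
by rewrite leq_addl ltn_subRL addnC ltnS.
Qed.

Section TruncatedExponential.
Variables (K : numFieldType) (B : comAlgType K).
Implicit Types (f g : ps B) (P Q : {poly B}).

Definition trunc N f : {poly B} := \poly_(i < N.+1) f i.

Definition invfact m : B := ((m`!)%:R : K)^-1 *: 1.

Definition expp N P : {poly B} := \sum_(m < N.+1) (invfact m)%:P * P ^+ m.

Lemma coefM_low P Q a b i :
  (forall j, (j < a)%N -> P`_j = 0) -> (forall j, (j < b)%N -> Q`_j = 0) ->
  (i < a + b)%N -> (P * Q)`_i = 0.
Proof.
move=> HP HQ Hi; rewrite coefM big1 // => j _.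
case: (ltnP j a) => Hj; first by rewrite HP ?mul0r.
have Hji : (j <= i)%N by rewrite -ltnS.
rewrite HQ ?mulr0 // ltn_subLR //.
by apply: leq_trans Hi _; rewrite leq_add2r.
Qed.

Lemma coefX_low P m i : P`_0 = 0 -> (i < m)%N -> (P ^+ m)`_i = 0.
Proof.
move=> P0; elim: m i => [|m IH] i // Hi.
by rewrite exprS (@coefM_low _ _ 1 m) // => j; rewrite ltnS leqn0 => /eqP ->.
Qed.

Lemma ps_pow_trunc N f m i : (i <= N)%N -> ps_pow f m i = (trunc N f ^+ m)`_i.
Proof.
elim: m i => [|m IH] i Hi; first by rewrite expr0 coef1 /ps_pow /ps_one /=; case: eqP.
rewrite exprS coefM /ps_pow iterS -/(ps_pow f m); apply: eq_bigr => j _.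
have Hj : (j <= N)%N by apply: leq_trans Hi; rewrite -ltnS.
by rewrite coef_poly ltnS Hj IH // (leq_trans (leq_subr _ _) Hi).
Qed.

Lemma ps_exp_trunc N f i : f 0%N = 0 -> (i <= N)%N ->
  ps_exp f i = (expp N (trunc N f))`_i.
Proof.
move=> f0 Hi; rewrite /expp coef_sum /ps_exp.
rewrite (big_ord_widen N.+1 (fun m => ((m`!)%:R : K)^-1 *: ps_pow f m i)) //.
rewrite big_mkcond; apply: eq_bigr => m _.
rewrite (ps_pow_trunc f m Hi) coefCM /invfact -scalerAl mul1r.
case: ifP => // Hm; rewrite coefX_low ?scaler0 //.
- by rewrite coef_poly.
- by rewrite ltnNge -ltnS Hm.
Qed.

Lemma invfact_bin m p : (p <= m)%N -> invfact m *+ 'C(m, p) = invfact p * invfact (m - p).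
Proof.
move=> Hp; rewrite /invfact scalerMnl -scalerAl mul1r scalerA; congr (_ *: _).
rewrite -(bin_fact Hp) -mulr_natr !natrM !invfM mulrAC mulVf ?mul1r //.
by rewrite pnatr_eq0 -lt0n bin_gt0.
Qed.

Lemma coef_exppD N P Q : P`_0 = 0 -> Q`_0 = 0 ->
  (expp N (P + Q))`_N = (expp N P * expp N Q)`_N.
Proof.
move=> P0 Q0.
pose H p q := ((invfact p)%:P * P ^+ p * ((invfact q)%:P * Q ^+ q))`_N.
transitivity (\sum_(m < N.+1) \sum_(p < m.+1) H p (m - p)%N).
  rewrite coef_sum; apply: eq_bigr => m _.
  rewrite addrC exprDn mulr_sumr coef_sum; apply: eq_bigr => p _.
  have Hp : (p <= m)%N by rewrite -ltnS.
  rewrite mulrnAr -mulrnAl -polyCMn invfact_bin // polyCM.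
  by rewrite /H [Q ^+ _ * P ^+ _]mulrC mulrACA.
rewrite sum_antidiagonal mulr_suml coef_sum; apply: eq_bigr => p _.
rewrite mulr_sumr coef_sum [RHS](bigID (fun q : 'I__ => p + q <= N)%N) /=.
rewrite [X in _ = _ + X]big1 ?addr0 // => q; rewrite -ltnNge => Hpq.
rewrite mulrACA -polyCM coefCM (@coefM_low _ _ p q) ?mulr0 // => j Hj; exact: coefX_low.
Qed.

Lemma ps_expD f g : f 0%N = 0 -> g 0%N = 0 ->
  ps_exp (f \+ g) =1 ps_mul (ps_exp f) (ps_exp g).
Proof.
move=> f0 g0 N.
have trunc0 h : h 0%N = 0 -> (trunc N h)`_0 = 0 by move=> h0; rewrite coef_poly.
have truncD : trunc N (f \+ g) = trunc N f + trunc N g.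
  by apply/polyP => i; rewrite coefD !coef_poly; case: ifP; rewrite ?addr0.
rewrite (@ps_exp_trunc N) /= ?f0 ?g0 ?addr0 // truncD coef_exppD ?trunc0 // coefM.
apply: eq_bigr => i _; have Hi : (i <= N)%N by rewrite -ltnS.
by rewrite !(@ps_exp_trunc N) ?leq_subr.
Qed.

End TruncatedExponential.

Section FrobeniusHomomorphisms.
Variables (K : numFieldType) (A B : comAlgType K).
Implicit Types (phi gamma psi : A -> B) (s : seq A).

Lemma frobE psi k s : size s = k.+1 -> frob psi k s = frobenius psi s.
Proof.
elim: k s => [|k IH] [|a s] //= [Hs].
  by case: s Hs => // _; rewrite /frobenius /= /dmul big_ord0 mulr1 subr0.
rewrite -/(frobenius psi (a :: s)) frobenius_cons IH //; congr (_ - _).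
rewrite /dmul Hs; apply: eq_bigr => j _.
by apply: IH; rewrite size_set_nth Hs; apply/maxn_idPr.
Qed.

Lemma nhom_frobenius_eq0 n psi s : is_nhom n psi -> (n < size s)%N -> frobenius psi s = 0.
Proof.
move=> [_ [_ Hfrob]] Hs; have := Hfrob _ (in_tuple s) Hs.
by rewrite /FrobMap /= frobE // prednK // (leq_ltn_trans _ Hs).
Qed.

Lemma nhomD n m phi gamma :
  is_nhom n phi -> is_nhom m gamma -> is_nhom (n + m) (phi \+ gamma).
Proof.
move=> Hphi Hgamma; have [Lphi [phi1 _]] := Hphi; have [Lgamma [gamma1 _]] := Hgamma.
split; first by move=> c u v; rewrite /= Lphi Lgamma scalerDr addrACA.
split; first by rewrite /= phi1 gamma1 natrD.
move=> k t Hk.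
have Hsize : size t = k.-1.+1 by rewrite size_tuple prednK // (leq_ltn_trans _ Hk).
rewrite /FrobMap frobE //; apply: (frobeniusD_eq0 (n := n) (m := m)).
- by move=> s; apply: nhom_frobenius_eq0.
- by move=> s; apply: nhom_frobenius_eq0.
- by rewrite size_tuple.
Qed.

Lemma linear_map0 psi : linear psi -> psi 0 = 0.
Proof. by move=> Lpsi; have := Lpsi (-1) 0 0; rewrite scaler0 addr0 scaleN1r addNr. Qed.

Lemma charfunD phi gamma a : linear phi -> linear gamma ->
  charfun (phi \+ gamma) a = ps_mul (charfun phi a) (charfun gamma a).
Proof.
move=> Lphi Lgamma; apply: functional_extensionality.
by apply: ps_expD; rewrite /ln1p /= linear_map0.
Qed.

End FrobeniusHomomorphisms.

Theorem mainTheorem8 (K : numFieldType) (A B : comAlgType K)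
    (n m : nat) (phi gamma : A -> B) :
  (1 <= n)%N -> (1 <= m)%N ->
  is_nhom n phi -> is_nhom m gamma ->
  is_nhom (n + m) (fun x => phi x + gamma x) /\
  (forall a : A,
     charfun (fun x => phi x + gamma x) a
     = ps_mul (charfun phi a) (charfun gamma a)).
Proof.
move=> _ _ Hphi Hgamma; split; first exact: nhomD.
by move=> a; apply: charfunD; [case: Hphi | case: Hgamma].
Qed.
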